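(* For the Byzantine-tolerant algorithm described in the context, under the fair distributed daemon and any Byzantine behaviour: if $\gamma$ is a degree-stabilized configuration such that $I_\gamma$ is not a maximal independent set of the subgraph induced by $V_2\cup I_\gamma$, then within the round starting at $\gamma$ at least one of the following happens: (1) the rule Candidacy? is executed on a node of $V_1$; (2) a configuration $\gamma'$ with $I_\gamma\subsetneq I_{\gamma'}$ is reached; (3) a configuration $\gamma'$ in which Candidacy? is enabled on some node of $V_2$ is reached.
   Context: Network and model. $G=(V,E)$ is a finite simple undirected graph; $N(u)$ is the open neighbourhood of $u$, $N[u]=N(u)\cup\{u\}$, $\deg(u)=|N(u)|$. Nodes are anonymous. Each node holds local variables; a configuration is an assignment of values to all local variables. A rule ''guard $\to$ command'' is enabled on $u$ in $\gamma$ if its guard (a predicate on the variables of $u$ and its neighbours) holds; its command rewrites only $u$'s variables, possibly randomly. $u$ is activable if some rule is enabled on it. A transition $\gamma\xrightarrow{t}\gamma'$ is given by a nonempty set $t$ of moves $(u,r)$ with $r$ enabled on $u$ in $\gamma$, at most one per node, all executed simultaneously from the values in $\gamma$. An execution is a sequence of consecutive transitions chosen by a daemon. The fair distributed daemon may choose any such $t$, subject to fairness: no node may remain activable forever without being activated. Rounds. The rounds of an execution are consecutive segments of transitions: the first round starts at the beginning of the execution, each subsequent round starts immediately after the previous one ends, and the current round ends as soon as every node $u\in V$ has either been activated in at least one transition of the round or been non-activable in at least one configuration of the round. Byzantine nodes. A subset $B\subseteq V$ consists of Byzantine nodes: always activable and, when activated, they may set their variables to arbitrary values. $d(u,B)$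 is the graph distance from $u$ to $B$ and $V_i=\{u\in V: d(u,B)>i\}$. Algorithm. Each node $u$ has variables $s_u\in\{\bot,\top\}$ and $x_u\in\mathbb{N}$; $Rand(q)$ returns $1$ with probability $q$, else $0$. Non-Byzantine nodes follow the rules: (Refresh) $x_u\neq \deg(u)\ \to\ x_u:=\deg(u)$. (Candidacy?) $x_u=\deg(u)\wedge s_u=\bot\wedge \forall v\in N(u),\ s_v=\bot\ \to$ if $Rand\big(\frac{1}{1+\max\{x_v: v\in N[u]\}}\big)=1$ then $s_u:=\top$. (Withdrawal) $x_u=\deg(u)\wedge s_u=\top\wedge \exists v\in N(u),\ s_v=\top\ \to\ s_u:=\bot$. For a configuration $\gamma$, $I_\gamma=\{u\in V_1: s_u^\gamma=\top \text{ and } \forall v\in N(u),\ s_v^\gamma=\bot\}$. $\gamma$ is degree-stabilized if $x_u^\gamma=\deg(u)$ for every non-Byzantine node $u$. *)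

From mathcomp Require Import all_boot all_order.
Set Implicit Arguments. Unset Strict Implicit. Unset Printing Implicit Defensive.

Section Model.
Variables (T : finType) (e : rel T) (B : {set T}).

Definition nbhd (u : T) : {set T} := [set v | e u v].
Definition deg (u : T) : nat := #|nbhd u|.

Fixpoint ball (k : nat) (u : T) : {set T} :=
  match k with
  | 0 => [set u]
  | k'.+1 => ball k' u :|: [set v | [exists w in ball k' u, e w v]]
  end.

(* u \in Vgt i  <->  d(u,B) > i  (no Byzantine node within distance i) *)
Definition Vgt (i : nat) : {set T} := [set u | [disjoint ball i u & B]].

(* configurations: s = true encodes top, s = false encodes bot *)
Record config := Config { sv : T -> bool; xv : T -> nat }.

Definition maxN (c : config) (u : T) : nat :=
  \max_(v | (v == u) || e u v) xv c v.

Definition refresh_en (c : config) (u : T) : bool := xv c u != deg u.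
Definition cand_en (c : config) (u : T) : bool :=
  [&& xv c u == deg u, ~~ sv c u & [forall v, e u v ==> ~~ sv c v]].
Definition withdraw_en (c : config) (u : T) : bool :=
  [&& xv c u == deg u, sv c u & [exists v, e u v && sv c v]].

Definition activable (c : config) (u : T) : bool :=
  [|| u \in B, refresh_en c u, cand_en c u | withdraw_en c u].

Inductive move := MRefresh | MCand | MWithdraw | MByz.

(* a transition: t u = None if u is not activated, Some r if u executes r *)
Definition step (c : config) (t : T -> option move) (c' : config) : Prop :=
  (exists u, t u <> None) /\
  forall u, match t u with
  | None => sv c' u = sv c u /\ xv c' u = xv c u
  | Some MByz => u \in B   (* arbitrary new values *)
  | Some MRefresh => u \notin B /\ refresh_en c u /\
                     xv c' u = deg u /\ sv c' u = sv c u
  | Some MCand => u \notin B /\ cand_en c u /\ xv c' u = xv c u /\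
      (* Rand(q) = 1 sets top; Rand(q) = 0 is possible only when q < 1 *)
      (sv c' u = true \/ (sv c' u = false /\ 1 <= maxN c u))
  | Some MWithdraw => u \notin B /\ withdraw_en c u /\
                      xv c' u = xv c u /\ sv c' u = false
  end.

Definition terminal (c : config) : Prop := forall u, ~~ activable c u.

(* An execution as an infinite sequence; a finite (maximal) execution ending in
   a terminal configuration is encoded by stuttering with no activated node. *)
Definition execution (c : nat -> config) (t : nat -> T -> option move) : Prop :=
  forall i, step (c i) (t i) (c i.+1) \/
            (terminal (c i) /\ (forall u, t i u = None) /\ c i.+1 = c i).

Definition fair (c : nat -> config) (t : nat -> T -> option move) : Prop :=
  forall u i, exists2 j, i <= j &
    ~~ activable (c j) u \/ t j u <> None.

(* The segment of transitions 0..k (configurations c 0 .. c k.+1) satisfies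
   the round-ending condition. *)
Definition round_cond (c : nat -> config) (t : nat -> T -> option move)
  (k : nat) : Prop :=
  forall u, (exists2 j, j <= k & t j u <> None) \/
            (exists2 j, j <= k.+1 & ~~ activable (c j) u).

Definition first_round_end c t (k : nat) : Prop :=
  round_cond c t k /\ forall k', k' < k -> ~ round_cond c t k'.

Definition Iset (c : config) : {set T} :=
  [set u in Vgt 1 | sv c u && [forall v, e u v ==> ~~ sv c v]].

Definition degree_stabilized (c : config) : Prop :=
  forall u, u \notin B -> xv c u = deg u.

End Model.

Definition independent (T : finType) (e : rel T) (I : {set T}) : Prop :=
  forall u v, u \in I -> v \in I -> ~~ e u v.
Definition is_MIS (T : finType) (e : rel T) (W I : {set T}) : Prop :=
  I \subset W /\ independent e I /\
  forall w, w \in W -> w \notin I -> exists2 v, v \in I & e w v.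

(** Nodes of I_γ stay isolated tops forever: their neighbours are non-Byzantine
    and can neither become candidates (a top neighbour blocks Candidacy?) nor
    make them withdraw.  Take an uncovered w ∈ V_2 with no neighbour in I_γ and
    assume none of the three events happens during the round.  Then I stays
    equal to I_γ, and since Candidacy? is not enabled on w at the end of the
    round, w has a top neighbour v ∈ V_1 there.  Without Candidacy? moves on V_1,
    v was top during the whole round.  When v takes its turn in the round it
    either withdraws (it would then no longer be top) or is non-activable, i.e.
    an isolated top, so v ∈ I_γ — contradicting the choice of w. *)

From mathcomp Require Import all_boot all_order.
From Stdlib Require Import Classical.
Set Implicit Arguments. Unset Strict Implicit.

Lemma classical_ex_minn (P : nat -> Prop) :
  (exists n, P n) -> exists n, P n /\ forall m, m < n -> ~ P m.
Proof.
move=> [n]; elim/ltn_ind: n => n IH Pn.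
have [[m ltmn Pm] | none] := classic (exists2 m, m < n & P m).
  exact: IH ltmn Pm.
by exists n; split=> // m ltmn Pm; apply: none; exists m.
Qed.

Section Graph.
Variables (T : finType) (e : rel T) (B : {set T}).

Lemma mem_ballS k u x :
  (x \in ball e k.+1 u) = (x \in ball e k u) || [exists w in ball e k u, e w x].
Proof. by rewrite [ball e k.+1 u]/= !inE. Qed.

Lemma mem_ball k u : u \in ball e k u.
Proof. by elim: k => [|k IH]; rewrite ?mem_ballS ?IH // inE. Qed.

Lemma ball_adj k w v : e w v -> ball e k v \subset ball e k.+1 w.
Proof.
move=> ewv; elim: k => [|k IH]; apply/subsetP=> x.
  rewrite inE => /eqP->; rewrite mem_ballS; apply/orP; right.
  by apply/exists_inP; exists w; rewrite ?inE.
rewrite mem_ballS => /orP[xb | /exists_inP[y yb eyx]]; rewrite mem_ballS; apply/orP.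
  by left; apply: (subsetP IH).
by right; apply/exists_inP; exists y; first exact: (subsetP IH).
Qed.

Lemma Vgt_nonbyz i u : u \in Vgt e B i -> u \notin B.
Proof. by rewrite inE => /disjointFr->; rewrite ?mem_ball. Qed.

Lemma Vgt_adj i u v : u \in Vgt e B i.+1 -> e u v -> v \in Vgt e B i.
Proof. by rewrite !inE => H /(ball_adj i) sub; apply: disjointWl sub H. Qed.

Lemma VgtS i u : u \in Vgt e B i.+1 -> u \in Vgt e B i.
Proof.
by rewrite !inE; apply: disjointWl; apply/subsetP=> x xb; rewrite mem_ballS xb.
Qed.

Lemma Iset_independent c : independent e (Iset e B c).
Proof.
move=> u v; rewrite !inE => /and3P[_ _ /forallP nbu] /and3P[_ svv _].
by apply/negP=> euv; move: (nbu v); rewrite euv svv.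
Qed.

Lemma not_MIS_uncovered (W I : {set T}) :
  independent e I -> ~ is_MIS e (W :|: I) I ->
  exists w, [/\ w \in W, w \notin I & forall v, v \in I -> ~~ e w v].
Proof.
move=> indI notMIS.
have [/exists_inP[w /setDP[wW wI] /forall_inP nbw] | ] :=
  boolP [exists w in W :\: I, [forall v in I, ~~ e w v]]; first by exists w.
rewrite negb_exists_in => /forall_inP covered; exfalso; apply: notMIS.
split; [exact: subsetUr | split=> // w /setUP[wW | ->] // wI].
move: (covered w); rewrite inE wI wW negb_forall_in.
by move=> /(_ isT) /exists_inP[v vI]; rewrite negbK; exists v.
Qed.

Lemma fair_first_round_end c t :
  fair e B c t -> exists k, first_round_end e B c t k.
Proof.
move=> fr.
have served u : exists j, ~~ activable e B (c j) u || isSome (t j u).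
  have [j _ [na | act]] := fr u 0; exists j; first by rewrite na.
  by rewrite orbC; case: (t j u) act.
apply: classical_ex_minn; exists (\max_u xchoose (served u)) => u.
have le_max : xchoose (served u) <= \max_u xchoose (served u) := leq_bigmax u.
case/orP: (xchooseP (served u)) => [na | act].
  by right; exists (xchoose (served u)); first exact: leqW.
by left; exists (xchoose (served u)) => //; case: (t _ u) act.
Qed.

Section Execution.
Variables (c : nat -> config T) (t : nat -> T -> option move).
Hypotheses (esym : symmetric e) (exec : execution e B c t)
  (stab0 : degree_stabilized e B (c 0)).

Lemma degree_stabilized_forever j : degree_stabilized e B (c j).
Proof.
elim: j => // j IH u uB.
case: (exec j) => [[_ /(_ u)] | [_ [_ ->]]]; last exact: IH.
case: (t j u) => [[] | ] /=.
- by case=> _ [_ [-> _]].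
- by case=> _ [_ [-> _]]; apply: IH.
- by case=> _ [_ [-> _]]; apply: IH.
- by move=> uB'; rewrite uB' in uB.
- by case=> _ ->; apply: IH.
Qed.

Lemma step_nonbyz j u : u \notin B ->
  [\/ t j u = None /\ sv (c j.+1) u = sv (c j) u,
      t j u = Some MCand /\ cand_en e (c j) u
    | [/\ t j u = Some MWithdraw, withdraw_en e (c j) u & sv (c j.+1) u = false]].
Proof.
move=> uB.
case: (exec j) => [[_ /(_ u)] | [_ [/(_ u) -> ->]]]; last by constructor 1.
case: (t j u) => [[] | ] /=.
- by case=> _ [+ _]; rewrite /refresh_en degree_stabilized_forever ?eqxx.
- by case=> _ [cand _]; constructor 2.
- by case=> _ [wd [_ fall]]; constructor 3.
- by move=> uB'; rewrite uB' in uB.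
- by case=> stay _; constructor 1.
Qed.

Lemma Iset_persists j : Iset e B (c 0) \subset Iset e B (c j).
Proof.
apply/subsetP=> u; rewrite inE => /and3P[uV1 su0 /forallP nb0].
rewrite inE uV1 /=; have uB := Vgt_nonbyz uV1.
elim: j => [|j /andP[su /forallP nb]]; first by rewrite su0; apply/forallP.
have nbj v : e u v -> ~~ sv (c j) v by move=> euv; move/implyP: (nb v); apply.
apply/andP; split.
  case: (step_nonbyz j uB) =>
    [[_ ->] | [_ /and3P[_ nsu _]] | [_ /and3P[_ _ wd] _]] //.
    by rewrite su in nsu.
  by case/existsP: wd => v /andP[euv svv]; move: (nbj v euv); rewrite svv.
apply/forallP=> v; apply/implyP=> euv.
have vB := Vgt_nonbyz (Vgt_adj uV1 euv).
case: (step_nonbyz j vB) =>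
  [[_ ->] | [_ /and3P[_ _ /forallP nbv]] | [_ _ ->]] //.
  exact: nbj.
by move: (nbv u); rewrite esym euv su.
Qed.

Lemma top_without_candidacy u n : u \notin B ->
  (forall j, j < n -> t j u <> Some MCand) ->
  sv (c n) u -> forall j, j <= n -> sv (c j) u.
Proof.
move=> uB; elim: n => [|n IH] nocand topn j.
  by rewrite leqn0 => /eqP->.
rewrite leq_eqVlt => /orP[/eqP-> // | ltjn]; apply: IH => // [i lti | ].
  by apply: nocand; rewrite ltnS ltnW.
case: (step_nonbyz n uB) => [[_ <-] // | [cand _] | [_ _ fall]].
  by case: (nocand n (ltnSn n) cand).
by rewrite fall in topn.
Qed.

Variable k : nat.
Hypothesis round : round_cond e B c t k.
Hypothesis no_cand_V1 :
  forall j u, j <= k -> u \in Vgt e B 1 -> t j u <> Some MCand.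
Hypothesis no_growth :
  forall j, j <= k.+1 -> ~ Iset e B (c 0) \proper Iset e B (c j).
Hypothesis no_cand_V2 :
  forall j u, j <= k.+1 -> u \in Vgt e B 2 -> ~~ cand_en e (c j) u.

Lemma Iset_constant j : j <= k.+1 -> Iset e B (c j) = Iset e B (c 0).
Proof.
move=> le_jk; apply/eqP; rewrite eqEsubset Iset_persists andbT.
by apply: contraT => nsub; case: (no_growth le_jk); rewrite properE Iset_persists.
Qed.

Lemma isolated_top_in_Iset j u : j <= k.+1 -> u \in Vgt e B 1 -> sv (c j) u ->
  (forall v, e u v -> ~~ sv (c j) v) -> u \in Iset e B (c 0).
Proof.
move=> le_jk uV1 su nb; rewrite -(Iset_constant le_jk) inE uV1 su /=.
by apply/forallP=> v; apply/implyP; apply: nb.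
Qed.

Lemma uncovered_top_neighbour w : w \in Vgt e B 2 -> w \notin Iset e B (c 0) ->
  exists2 v, e w v & sv (c k.+1) v.
Proof.
move=> wV2 wI; have := no_cand_V2 (leqnn _) wV2.
rewrite /cand_en degree_stabilized_forever ?(Vgt_nonbyz wV2) // eqxx /=.
case: (boolP (sv (c k.+1) w)) => /= [sw _ | _ /forallPn[v]].
  apply: NNPP => nov; case/negP: wI.
  apply: (isolated_top_in_Iset (leqnn _) (VgtS wV2) sw).
  by move=> v ewv; apply/negP=> svv; apply: nov; exists v.
by rewrite negb_imply negbK => /andP[]; exists v.
Qed.

Lemma V2_dominated_by_Iset w : w \in Vgt e B 2 -> w \notin Iset e B (c 0) ->
  exists2 v, v \in Iset e B (c 0) & e w v.
Proof.
move=> wV2 wI; have [v ewv topv] := uncovered_top_neighbour wV2 wI.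
have vV1 := Vgt_adj wV2 ewv; have vB := Vgt_nonbyz vV1.
have nocand i : i < k.+1 -> t i v <> Some MCand.
  by rewrite ltnS => le_ik; apply: no_cand_V1.
have top := top_without_candidacy vB nocand topv.
exists v => //; case: (round v) => [[j le_jk act] | [j le_jk na]].
  case: (step_nonbyz j vB) => [[idle _] | [cand _] | [_ _ fall]].
  - by case: (act idle).
  - by case: (no_cand_V1 le_jk vV1 cand).
  - by move: (top j.+1 le_jk); rewrite fall.
apply: isolated_top_in_Iset vV1 (top j le_jk) _ => // x evx; apply/negP=> sx.
have wd : [exists y, e v y && sv (c j) y].
  by apply/existsP; exists x; rewrite evx sx.
move/negP: na; apply; rewrite /activable /withdraw_en.
by rewrite degree_stabilized_forever // eqxx top // wd !orbT.
Qed.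

End Execution.
End Graph.

Theorem mainTheorem9 (T : finType) (e : rel T) (B : {set T})
  (esym : symmetric e) (eirr : irreflexive e)
  (c : nat -> config T) (t : nat -> T -> option move) :
  execution e B c t -> fair e B c t ->
  degree_stabilized e B (c 0) ->
  ~ is_MIS e (Vgt e B 2 :|: Iset e B (c 0)) (Iset e B (c 0)) ->
  exists k, first_round_end e B c t k /\
    [\/ exists j u, [/\ j <= k, u \in Vgt e B 1 & t j u = Some MCand],
        exists2 j, j <= k.+1 & Iset e B (c 0) \proper Iset e B (c j)
      | exists j u, [/\ j <= k.+1, u \in Vgt e B 2 & cand_en e (c j) u]].
Proof.
move=> exec fr stab0 notMIS.
have [k [round kmin]] := fair_first_round_end fr.
have [w [wV2 wI nbw]] := not_MIS_uncovered (@Iset_independent _ e B (c 0)) notMIS.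
exists k; split=> //; apply: NNPP => none.
have [v vI ewv] : exists2 v, v \in Iset e B (c 0) & e w v.
  apply: (V2_dominated_by_Iset esym exec stab0 round) => //
    [j u le_jk uV1 cand | j le_jk grow | j u le_jk uV2].
  - by apply: none; apply: Or31; exists j, u.
  - by apply: none; apply: Or32; exists j.
  - by apply/negP=> cand; apply: none; apply: Or33; exists j, u.
by move: (nbw v vI); rewrite ewv.
Qed.
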